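(* Let $(X,\le)$ be a partially ordered set. Then a directed completion $(\overline X,\bar\le)$, $\iota:X\to\overline X$ of $X$ exists, and it is unique up to unique isomorphism. Moreover: (i) for every $x\in\overline X$ the set $\iota(X)\cap\downarrow x\subset\overline X$ has a tip, and this tip is $x$; (ii) for every dcpo $(Z,\le_Z)$ and every map $T:X\to Z$ with the Mcp, the unique map $\bar T:\overline X\to Z$ with the Mcp such that $\bar T\circ\iota=T$ is given by $$\bar T(\bar x)=\sup\{T(x):\ x\in X,\ \iota(x)\,\bar\le\,\bar x\}\qquad\forall\bar x\in\overline X,$$ where in particular this supremum exists in $Z$; (iii) an explicit realization is the following: let $Y:=\{A\subset X:\widehat A=A\}$ ordered by inclusion, let $\iota:X\to Y$, $\iota(x):=\downarrow x$, and let $\overline X$ be the directed-sup-closure of $\iota(X)$ computed in $Y$. With this choice, an element $A\in Y$ belongs to $\overline X$ if and only if the set $\{\iota(a):a\in A\}\subset Y$ has a tip in $Y$, and in this case this tip is $A$.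
   Context: Let $(X,\le)$ be a partially ordered set. A subset $D\subset X$ is directed if every finite subset of $D$ (including the empty one) has an upper bound in $D$; in particular directed sets are nonempty. $A\subset X$ is a lower set if $x\in A$ and $y\le x$ imply $y\in A$; $\downarrow A:=\{x\in X:x\le a\text{ for some }a\in A\}$ and $\downarrow a:=\downarrow\{a\}$. $(X,\le)$ is a directed complete partial order (dcpo) if every directed subset has a supremum. A subset $A\subset X$ is directed-sup-closed if the supremum of every directed $D\subset A$ which has a supremum in $X$ belongs to $A$. For $A\subset X$, $\overline A$ is the smallest directed-sup-closed subset of $X$ containing $A$, and $\widehat A$ is the smallest subset of $X$ containing $A$ which is both a lower set and directed-sup-closed. $A$ is dense if $\overline A=X$. $A$ has a tip if $\overline A$ has a maximum; this maximum is denoted ${\sf tip}\,A$. A map $T:X_1\to X_2$ between partially ordered sets has the Monotone Convergence Property (Mcp) if for every directed $D\subset X_1$ having a supremum, $T(D)$ has a supremum and $T(\sup D)=\sup T(D)$. A directed completion of $(X,\le)$ is a dcpo $(\overline X,\bar\le)$ together with a map $\iota:X\to\overline X$ with the Mcp such that for every dcpo $Z$ and every map $T:X\to Z$ with the Mcp there is a unique map $\bar T:\overline X\to Z$ with the Mcp satisfying $\bar T\circ\iota=T$. *)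

From Stdlib Require Import List FunctionalExtensionality PropExtensionality.


Definition is_porder {X : Type} (le : X -> X -> Prop) : Prop :=
  (forall x, le x x) /\
  (forall x y z, le x y -> le y z -> le x z) /\
  (forall x y, le x y -> le y x -> x = y).

Definition directed {X : Type} (le : X -> X -> Prop) (D : X -> Prop) : Prop :=
  forall l : list X, (forall x, In x l -> D x) ->
    exists u, D u /\ forall x, In x l -> le x u.

Definition is_sup {X : Type} (le : X -> X -> Prop) (A : X -> Prop) (s : X) : Prop :=
  (forall a, A a -> le a s) /\ (forall u, (forall a, A a -> le a u) -> le s u).

Definition is_dcpo {X : Type} (le : X -> X -> Prop) : Prop :=
  is_porder le /\ forall D, directed le D -> exists s, is_sup le D s.

Definition image {X Y : Type} (T : X -> Y) (D : X -> Prop) : Y -> Prop :=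
  fun y => exists x, D x /\ y = T x.

Definition Mcp {X1 X2 : Type} (le1 : X1 -> X1 -> Prop) (le2 : X2 -> X2 -> Prop)
  (T : X1 -> X2) : Prop :=
  forall D s, directed le1 D -> is_sup le1 D s -> is_sup le2 (image T D) (T s).

Definition lower_set {X : Type} (le : X -> X -> Prop) (A : X -> Prop) : Prop :=
  forall x y, A x -> le y x -> A y.

Definition down1 {X : Type} (le : X -> X -> Prop) (a : X) : X -> Prop :=
  fun x => le x a.

Definition dsup_closed {X : Type} (le : X -> X -> Prop) (A : X -> Prop) : Prop :=
  forall D, directed le D -> (forall d, D d -> A d) ->
    forall s, is_sup le D s -> A s.

Definition dclosure {X : Type} (le : X -> X -> Prop) (A : X -> Prop) : X -> Prop :=
  fun x => forall B, dsup_closed le B -> (forall a, A a -> B a) -> B x.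

Definition hat {X : Type} (le : X -> X -> Prop) (A : X -> Prop) : X -> Prop :=
  fun x => forall B, lower_set le B -> dsup_closed le B ->
    (forall a, A a -> B a) -> B x.

Definition tip_is {X : Type} (le : X -> X -> Prop) (A : X -> Prop) (t : X) : Prop :=
  dclosure le A t /\ forall y, dclosure le A y -> le y t.

Definition has_tip {X : Type} (le : X -> X -> Prop) (A : X -> Prop) : Prop :=
  exists t, tip_is le A t.

Definition directed_completion {X Xb : Type} (le : X -> X -> Prop)
  (leb : Xb -> Xb -> Prop) (iota : X -> Xb) : Prop :=
  is_dcpo leb /\ Mcp le leb iota /\
  forall (Z : Type) (leZ : Z -> Z -> Prop), is_dcpo leZ ->
    forall T : X -> Z, Mcp le leZ T ->
      (exists Tb : Xb -> Z, Mcp leb leZ Tb /\ forall x, Tb (iota x) = T x) /\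
      (forall Tb1 Tb2 : Xb -> Z,
         Mcp leb leZ Tb1 -> (forall x, Tb1 (iota x) = T x) ->
         Mcp leb leZ Tb2 -> (forall x, Tb2 (iota x) = T x) ->
         forall y, Tb1 y = Tb2 y).

Definition order_iso {X1 X2 : Type} (le1 : X1 -> X1 -> Prop) (le2 : X2 -> X2 -> Prop)
  (phi : X1 -> X2) : Prop :=
  (exists psi : X2 -> X1, (forall a, psi (phi a) = a) /\ (forall b, phi (psi b) = b)) /\
  (forall a b, le1 a b <-> le2 (phi a) (phi b)).

Definition Yset {X : Type} (le : X -> X -> Prop) : Type :=
  {A : X -> Prop | hat le A = A}.

Lemma hat_down1 {X : Type} (le : X -> X -> Prop) (H : is_porder le) (x : X) :
  hat le (down1 le x) = down1 le x.
Proof.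
  destruct H as [Hr [Ht Ha]].
  apply functional_extensionality; intro y; apply propositional_extensionality; split.
  - intro Hy; apply Hy.
    + intros u v Hu Hv; unfold down1 in *; eauto.
    + intros D _ HD s [_ Hs]; apply Hs; exact HD.
    + auto.
  - intros Hy B _ _ HB; auto.
Qed.

Definition iotaY {X : Type} (le : X -> X -> Prop) (H : is_porder le) (x : X) : Yset le :=
  exist _ (down1 le x) (hat_down1 le H x).

Definition leY {X : Type} (le : X -> X -> Prop) (A B : Yset le) : Prop :=
  forall x, proj1_sig A x -> proj1_sig B x.

Definition XbarP {X : Type} (le : X -> X -> Prop) (H : is_porder le) (A : Yset le) : Prop :=
  dclosure (leY le) (fun B => exists x, B = iotaY le H x) A.

Definition XbarT {X : Type} (le : X -> X -> Prop) (H : is_porder le) : Type :=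
  {A : Yset le | XbarP le H A}.

Lemma iotaY_XbarP {X : Type} (le : X -> X -> Prop) (H : is_porder le) (x : X) :
  XbarP le H (iotaY le H x).
Proof. intros B _ HB; apply HB; exists x; reflexivity. Qed.

Definition iotaXb {X : Type} (le : X -> X -> Prop) (H : is_porder le) (x : X) : XbarT le H :=
  exist _ (iotaY le H x) (iotaY_XbarP le H x).

Definition leXb {X : Type} (le : X -> X -> Prop) (H : is_porder le) (A B : XbarT le H) : Prop :=
  leY le (proj1_sig A) (proj1_sig B).

(* The lower, directed-sup-closed subsets of X form a complete lattice Y in which
   the supremum of a family is the hull of its union; X embeds in Y by x |-> down x,
   and the completion is the directed-sup-closure of this image.  A map T with the Mcp
   extends by A |-> sup T(A).  This supremum exists on the whole closure by induction
   along it: for a directed family F the suprema of T over the members of F form a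
   directed set, and its supremum bounds T on the hull of the union of F because
   {x | T x <= t} is itself lower and directed-sup-closed.  Two Mcp maps that agree on
   a set agree on its directed-sup-closure, which gives uniqueness of extensions.  In
   an arbitrary completion the image of X is dense, since the closure of that image is
   a dcpo into which X maps, and the resulting retraction must be the identity;
   density yields (i) and (ii). *)

From Stdlib Require Import List FunctionalExtensionality PropExtensionality
  ProofIrrelevance IndefiniteDescription.

Lemma sig_eq {A : Type} {P : A -> Prop} (a b : sig P) :
  proj1_sig a = proj1_sig b -> a = b.
Proof. apply eq_sig_hprop; intros; apply proof_irrelevance. Qed.

Lemma set_ext {X : Type} (A B : X -> Prop) : (forall x, A x <-> B x) -> A = B.
Proof.
  intros E; apply functional_extensionality; intros x.
  apply propositional_extensionality, E.
Qed.

Section DirectedSets.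
Context {X : Type} {le : X -> X -> Prop}.

Lemma directed_intro (D : X -> Prop) :
  (forall x y z, le x y -> le y z -> le x z) ->
  (exists d, D d) ->
  (forall a b, D a -> D b -> exists c, D c /\ le a c /\ le b c) ->
  directed le D.
Proof.
  intros Htr [d0 Hd0] Hpair l; induction l as [|x l IH]; intros Hl.
  - exists d0; split; [exact Hd0 | intros x []].
  - destruct IH as [u [Hu Hlu]]; [intros y Hy; apply Hl; right; exact Hy |].
    destruct (Hpair x u (Hl x (or_introl eq_refl)) Hu) as [c [Hc [Hxc Huc]]].
    exists c; split; [exact Hc |].
    intros y [<- | Hy]; [exact Hxc | eauto].
Qed.

Lemma directed_nonempty (D : X -> Prop) : directed le D -> exists d, D d.
Proof. intros HD; destruct (HD nil) as [u [Hu _]]; [intros x [] | eauto]. Qed.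

Lemma directed_pair (D : X -> Prop) : directed le D ->
  forall a b, D a -> D b -> exists c, D c /\ le a c /\ le b c.
Proof.
  intros HD a b Ha Hb; destruct (HD (a :: b :: nil)) as [u [Hu Hl]].
  - intros x [<- | [<- | []]]; assumption.
  - exists u; repeat split; [exact Hu | apply Hl; simpl; auto ..].
Qed.

Lemma sup_unique : is_porder le ->
  forall (A : X -> Prop) s t, is_sup le A s -> is_sup le A t -> s = t.
Proof.
  intros [_ [_ Hanti]] A s t [Hs1 Hs2] [Ht1 Ht2].
  apply Hanti; [apply Hs2, Ht1 | apply Ht2, Hs1].
Qed.

Lemma is_sup_ext (A B : X -> Prop) s :
  (forall z, A z <-> B z) -> is_sup le A s -> is_sup le B s.
Proof. intros E; rewrite (set_ext A B E); trivial. Qed.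

Lemma dclosure_incl (R : X -> Prop) x : R x -> dclosure le R x.
Proof. intros Hx B _ HB; apply HB, Hx. Qed.

Lemma dclosure_dsup_closed (R : X -> Prop) : dsup_closed le (dclosure le R).
Proof.
  intros D HD HDR s Hs B HB HRB.
  apply (HB D HD); [intros d Hd; apply HDR; auto | exact Hs].
Qed.

Lemma dclosure_mono (R R' : X -> Prop) :
  (forall x, R x -> R' x) -> forall x, dclosure le R x -> dclosure le R' x.
Proof. intros HR x Hx B HB HR'B; apply Hx; auto. Qed.

End DirectedSets.

Section MonotoneConvergence.
Context {X1 X2 X3 : Type}
  {le1 : X1 -> X1 -> Prop} {le2 : X2 -> X2 -> Prop} {le3 : X3 -> X3 -> Prop}.

Lemma mcp_monotone (f : X1 -> X2) :
  is_porder le1 -> Mcp le1 le2 f -> forall x y, le1 x y -> le2 (f x) (f y).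
Proof.
  intros [Hrefl [Htr _]] Hf x y Hxy.
  set (D := fun z => z = x \/ z = y).
  assert (HD : directed le1 D).
  { apply directed_intro; [exact Htr | exists x; left; reflexivity |].
    intros a b Ha Hb; exists y; split; [right; reflexivity |].
    split; [destruct Ha as [-> | ->] | destruct Hb as [-> | ->]]; auto. }
  assert (Hy : is_sup le1 D y).
  { split; [intros a [-> | ->]; auto | intros u Hu; apply Hu; right; reflexivity]. }
  apply (proj1 (Hf D y HD Hy)); exists x; split; [left |]; reflexivity.
Qed.

Lemma directed_image (f : X1 -> X2) (D : X1 -> Prop) :
  (forall x y z, le2 x y -> le2 y z -> le2 x z) ->
  (forall x y, le1 x y -> le2 (f x) (f y)) ->
  directed le1 D -> directed le2 (image f D).
Proof.
  intros Htr Hf HD; apply directed_intro; [exact Htr | |].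
  - destruct (directed_nonempty D HD) as [d Hd]; exists (f d), d; auto.
  - intros a b [x [Hx ->]] [y [Hy ->]].
    destruct (directed_pair D HD x y Hx Hy) as [c [Hc [Hxc Hyc]]].
    exists (f c); split; [exists c; auto | auto].
Qed.

Lemma mcp_comp (f : X1 -> X2) (g : X2 -> X3) :
  is_porder le1 -> is_porder le2 -> Mcp le1 le2 f -> Mcp le2 le3 g ->
  Mcp le1 le3 (fun x => g (f x)).
Proof.
  intros P1 P2 Hf Hg D s HD Hs.
  assert (HfD : directed le2 (image f D)).
  { apply directed_image; [apply P2 | apply mcp_monotone; assumption | exact HD]. }
  apply is_sup_ext with (image g (image f D)); [| apply Hg; [exact HfD | apply Hf; assumption]].
  intros z; split.
  - intros [y [[x [Hx ->]] ->]]; exists x; auto.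
  - intros [x [Hx ->]]; exists (f x); split; [exists x |]; auto.
Qed.

Lemma mcp_eq_on_dclosure (f g : X1 -> X2) (R : X1 -> Prop) :
  is_porder le2 -> Mcp le1 le2 f -> Mcp le1 le2 g -> (forall x, R x -> f x = g x) ->
  forall x, dclosure le1 R x -> f x = g x.
Proof.
  intros P2 Hf Hg HR x Hx; apply (Hx (fun x => f x = g x)); [| exact HR].
  intros D HD HDfg s Hs.
  apply (sup_unique P2 (image f D)); [apply Hf; assumption |].
  apply is_sup_ext with (image g D); [| apply Hg; assumption].
  intros z; split; intros [y [Hy ->]]; exists y; rewrite (HDfg y Hy); auto.
Qed.

Lemma order_iso_mcp (phi : X1 -> X2) : order_iso le1 le2 phi -> Mcp le1 le2 phi.
Proof.
  intros [[psi [Hpsi Hphi]] Hle] D s HD [Hs1 Hs2]; split.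
  - intros a [x [Hx ->]]; apply Hle, Hs1, Hx.
  - intros u Hu; rewrite <- (Hphi u); apply Hle, Hs2.
    intros a Ha; apply Hle; rewrite Hphi; apply Hu; exists a; auto.
Qed.

End MonotoneConvergence.

Lemma mcp_id {X : Type} (le : X -> X -> Prop) : Mcp le le (fun x => x).
Proof.
  intros D s _ Hs; apply is_sup_ext with D; [| exact Hs].
  intros z; split; [exists z; auto | intros [x [Hx ->]]; exact Hx].
Qed.

Section Subposet.
Context {P : Type} (le : P -> P -> Prop) (C : P -> Prop).

Definition suble (a b : sig C) : Prop := le (proj1_sig a) (proj1_sig b).

Lemma sub_porder : is_porder le -> is_porder suble.
Proof.
  intros [Hrefl [Htr Hanti]]; unfold suble; split; [| split].
  - intros a; apply Hrefl.
  - intros a b c; apply Htr.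
  - intros a b Hab Hba; apply sig_eq; auto.
Qed.

Lemma directed_lift (D : P -> Prop) : (forall d, D d -> C d) ->
  directed le D -> directed suble (fun a => D (proj1_sig a)).
Proof.
  intros HDC HD l Hl; destruct (HD (map (@proj1_sig _ C) l)) as [u [Hu Hup]].
  - intros x Hx; apply in_map_iff in Hx as [a [<- Ha]]; apply Hl, Ha.
  - exists (exist C u (HDC u Hu)); split; [exact Hu |].
    intros a Ha; apply Hup, in_map, Ha.
Qed.

Lemma is_sup_lift (D : P -> Prop) s (Cs : C s) : (forall d, D d -> C d) ->
  is_sup le D s -> is_sup suble (fun a => D (proj1_sig a)) (exist C s Cs).
Proof.
  intros HDC [Hs1 Hs2]; split.
  - intros a Ha; apply Hs1, Ha.
  - intros u Hu; apply Hs2; intros d Hd.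
    apply (Hu (exist C d (HDC d Hd))), Hd.
Qed.

Lemma mcp_corestrict {W : Type} {leW : W -> W -> Prop} (f : W -> sig C) :
  Mcp leW le (fun w => proj1_sig (f w)) -> Mcp leW suble f.
Proof.
  intros Hf D s HD Hs; destruct (Hf D s HD Hs) as [Hs1 Hs2]; split.
  - intros a [d [Hd ->]]; apply Hs1; exists d; auto.
  - intros u Hu; apply Hs2; intros a [d [Hd ->]]; apply (Hu (f d)); exists d; auto.
Qed.

Hypothesis Hpo : is_porder le.
Hypothesis HC : dsup_closed le C.
Hypothesis Hsups : forall D, directed le D -> (forall d, D d -> C d) ->
  exists s, is_sup le D s.

Lemma sub_directed_sup (D : sig C -> Prop) : directed suble D ->
  exists s (Cs : C s),
    is_sup le (image (@proj1_sig _ C) D) s /\ is_sup suble D (exist C s Cs).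
Proof.
  intros HD.
  assert (HDC : forall d, image (@proj1_sig _ C) D d -> C d)
    by (intros d [a [_ ->]]; apply proj2_sig).
  assert (HpD : directed le (image (@proj1_sig _ C) D)).
  { apply (directed_image (le1 := suble)); [apply Hpo | auto | exact HD]. }
  destruct (Hsups _ HpD HDC) as [s Hs].
  exists s, (HC _ HpD HDC s Hs); split; [exact Hs |].
  apply is_sup_ext with (fun a => image (@proj1_sig _ C) D (proj1_sig a));
    [| apply is_sup_lift; assumption].
  intros a; split; [intros [b [Hb E]]; rewrite (sig_eq a b E); exact Hb |].
  intros Ha; exists a; auto.
Qed.

Lemma sub_dcpo : is_dcpo suble.
Proof.
  split; [apply sub_porder, Hpo |].
  intros D HD; destruct (sub_directed_sup D HD) as [s [Cs [_ Hs]]]; eauto.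
Qed.

Lemma proj1_sig_mcp : Mcp suble le (@proj1_sig _ C).
Proof.
  intros D s HD Hs; destruct (sub_directed_sup D HD) as [s' [Cs [Hs' Hsub]]].
  rewrite (sup_unique (sub_porder Hpo) D s _ Hs Hsub); exact Hs'.
Qed.

End Subposet.

Lemma dclosure_sub_dense {P : Type} (le : P -> P -> Prop) (R : P -> Prop)
  (a : sig (dclosure le R)) :
  dclosure (suble le (dclosure le R)) (fun b => R (proj1_sig b)) a.
Proof.
  destruct a as [p Hp]; intros Q HQ HRQ.
  assert (HB : exists h, Q (exist _ p h)).
  { apply (Hp (fun p => exists h, Q (exist _ p h))).
    - intros D HD HDB s Hs.
      assert (HDC : forall d, D d -> dclosure le R d)
        by (intros d Hd; destruct (HDB d Hd) as [h _]; exact h).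
      exists (dclosure_dsup_closed R D HD HDC s Hs).
      apply (HQ (fun a => D (proj1_sig a)));
        [apply directed_lift; assumption | | apply is_sup_lift; assumption].
      intros a Ha; destruct (HDB _ Ha) as [h Hh].
      rewrite (sig_eq a (exist _ _ h) eq_refl); exact Hh.
    - intros r Hr; exists (dclosure_incl R r Hr); apply HRQ, Hr. }
  destruct HB as [h Hh]; rewrite (sig_eq (exist _ p Hp) (exist _ p h) eq_refl); exact Hh.
Qed.

Section LowerSets.
Context {X : Type} (le : X -> X -> Prop).

Lemma hat_incl (A : X -> Prop) x : A x -> hat le A x.
Proof. intros Hx B _ _ HB; apply HB, Hx. Qed.

Lemma hat_lower (A : X -> Prop) : lower_set le (hat le A).
Proof. intros x y Hx Hyx B HBl HBd HB; apply (HBl x y); [apply Hx | exact Hyx]; auto. Qed.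

Lemma hat_dsup_closed (A : X -> Prop) : dsup_closed le (hat le A).
Proof.
  intros D HD HDA s Hs B HBl HBd HB.
  apply (HBd D HD); [intros d Hd; apply HDA | exact Hs]; auto.
Qed.

Lemma hat_idem (A : X -> Prop) : hat le (hat le A) = hat le A.
Proof.
  apply set_ext; intros x; split; [| apply hat_incl].
  intros Hx; apply Hx; [apply hat_lower | apply hat_dsup_closed | auto].
Qed.

Lemma Yset_lower (A : Yset le) : lower_set le (proj1_sig A).
Proof. destruct A as [A E]; simpl; rewrite <- E; apply hat_lower. Qed.

Lemma Yset_dsup_closed (A : Yset le) : dsup_closed le (proj1_sig A).
Proof. destruct A as [A E]; simpl; rewrite <- E; apply hat_dsup_closed. Qed.

Lemma leY_porder : is_porder (leY le).
Proof.
  unfold leY; split; [| split]; auto.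
  intros A B HAB HBA; apply sig_eq, set_ext; split; auto.
Qed.

Definition Yunion (F : Yset le -> Prop) : X -> Prop :=
  fun x => exists B, F B /\ proj1_sig B x.

Definition Ysup (F : Yset le -> Prop) : Yset le :=
  exist _ (hat le (Yunion F)) (hat_idem (Yunion F)).

Lemma Ysup_is_sup (F : Yset le -> Prop) : is_sup (leY le) F (Ysup F).
Proof.
  split.
  - intros B HB x Hx; apply hat_incl; exists B; auto.
  - intros U HU x Hx; apply Hx; [apply Yset_lower | apply Yset_dsup_closed |].
    intros y [B [HB HBy]]; apply (HU B HB y HBy).
Qed.

Lemma is_sup_Ysup (F : Yset le -> Prop) s : is_sup (leY le) F s -> s = Ysup F.
Proof. intros Hs; apply (sup_unique leY_porder F); [exact Hs | apply Ysup_is_sup]. Qed.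

Lemma Y_has_sups (F : Yset le -> Prop) : exists s, is_sup (leY le) F s.
Proof. exists (Ysup F); apply Ysup_is_sup. Qed.

End LowerSets.

Section Construction.
Context {X : Type} (le : X -> X -> Prop) (Hpo : is_porder le).

Lemma Xbar_dcpo : is_dcpo (leXb le Hpo).
Proof.
  exact (sub_dcpo _ _ (leY_porder le) (dclosure_dsup_closed _)
    (fun D _ _ => Y_has_sups le D)). Qed.

Lemma Xbar_proj_mcp : Mcp (leXb le Hpo) (leY le) (@proj1_sig _ (XbarP le Hpo)).
Proof.
  exact (proj1_sig_mcp _ _ (leY_porder le) (dclosure_dsup_closed _)
    (fun D _ _ => Y_has_sups le D)). Qed.

Lemma iotaXb_mcp : Mcp le (leXb le Hpo) (iotaXb le Hpo).
Proof.
  pose proof Hpo as [Hrefl [Htr _]].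
  intros D x HD [Hx1 Hx2]; split.
  - intros a [d [Hd ->]] y Hy; exact (Htr _ _ _ Hy (Hx1 d Hd)).
  - intros U HU y Hy; apply (Yset_lower le (proj1_sig U) x); [| exact Hy].
    apply (Yset_dsup_closed le (proj1_sig U) D HD); [| split; assumption].
    intros d Hd; apply (HU (iotaXb le Hpo d)); [exists d; auto | apply Hrefl].
Qed.

Lemma Xbar_dense (A : XbarT le Hpo) :
  dclosure (leXb le Hpo) (fun B => exists x, proj1_sig B = iotaY le Hpo x) A.
Proof. exact (dclosure_sub_dense (leY le) (fun B => exists x, B = iotaY le Hpo x) A). Qed.

Section Extension.
Context {Z : Type} {leZ : Z -> Z -> Prop} (HZ : is_dcpo leZ) (T : X -> Z)
  (HT : Mcp le leZ T).

Lemma mcp_bound_hat (A : X -> Prop) t :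
  (forall x, A x -> leZ (T x) t) -> forall x, hat le A x -> leZ (T x) t.
Proof.
  pose proof HZ as [[_ [HZtr _]] _].
  intros HA x Hx; apply Hx; [| | exact HA].
  - intros y w Hy Hwy; exact (HZtr _ _ _ (mcp_monotone T Hpo HT w y Hwy) Hy).
  - intros D HD HDt s Hs; apply (proj2 (HT D s HD Hs)).
    intros a [d [Hd ->]]; apply HDt, Hd.
Qed.

Lemma sup_image_down1 x : is_sup leZ (image T (down1 le x)) (T x).
Proof.
  split.
  - intros a [y [Hy ->]]; apply (mcp_monotone T Hpo HT), Hy.
  - intros u Hu; apply Hu; exists x; split; [apply Hpo | reflexivity].
Qed.

Definition sup_images (F : Yset le -> Prop) : Z -> Prop :=
  fun z => exists A, F A /\ is_sup leZ (image T (proj1_sig A)) z.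

Section DirectedFamily.
Variable F : Yset le -> Prop.
Hypothesis Hsups : forall A, F A -> exists z, is_sup leZ (image T (proj1_sig A)) z.

Lemma sup_images_directed : directed (leY le) F -> directed leZ (sup_images F).
Proof.
  pose proof HZ as [[_ [HZtr _]] _].
  intros HF; apply directed_intro; [exact HZtr | |].
  - destruct (directed_nonempty F HF) as [A HA]; destruct (Hsups A HA) as [z Hz].
    exists z, A; auto.
  - intros z1 z2 [A1 [HA1 Hz1]] [A2 [HA2 Hz2]].
    destruct (directed_pair F HF A1 A2 HA1 HA2) as [A3 [HA3 [H13 H23]]].
    destruct (Hsups A3 HA3) as [z3 Hz3].
    exists z3; split; [exists A3; auto |].
    split; [apply (proj2 Hz1) | apply (proj2 Hz2)];
      intros a [x [Hx ->]]; apply (proj1 Hz3); exists x; auto.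
Qed.

Lemma sup_images_is_sup t :
  is_sup leZ (sup_images F) t -> is_sup leZ (image T (proj1_sig (Ysup le F))) t.
Proof.
  pose proof HZ as [[_ [HZtr _]] _].
  intros [Ht1 Ht2]; split.
  - intros a [x [Hx ->]]; apply (mcp_bound_hat (Yunion le F)); [| exact Hx].
    intros y [B [HB HBy]]; destruct (Hsups B HB) as [z Hz].
    apply HZtr with z; [apply (proj1 Hz); exists y; auto | apply Ht1; exists B; auto].
  - intros u Hu; apply Ht2; intros z [A [HA Hz]]; apply (proj2 Hz).
    intros a [x [Hx ->]]; apply Hu; exists x; split; [| reflexivity].
    apply hat_incl; exists A; auto.
Qed.

End DirectedFamily.

Lemma sup_image_exists (A : Yset le) :
  XbarP le Hpo A -> exists z, is_sup leZ (image T (proj1_sig A)) z.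
Proof.
  intros HA; apply HA.
  - intros F HF Hsups s Hs; rewrite (is_sup_Ysup le F s Hs).
    destruct (proj2 HZ _ (sup_images_directed F Hsups HF)) as [t Ht].
    exists t; apply sup_images_is_sup; assumption.
  - intros B [x ->]; exists (T x); apply sup_image_down1.
Qed.

Definition extension (A : XbarT le Hpo) : Z :=
  proj1_sig (constructive_indefinite_description _
    (sup_image_exists (proj1_sig A) (proj2_sig A))).

Lemma extension_spec (A : XbarT le Hpo) :
  is_sup leZ (image T (proj1_sig (proj1_sig A))) (extension A).
Proof. unfold extension; apply proj2_sig. Qed.

Lemma extension_iota x : extension (iotaXb le Hpo x) = T x.
Proof.
  apply (sup_unique (proj1 HZ) (image T (down1 le x)));
    [apply (extension_spec (iotaXb le Hpo x)) | apply sup_image_down1].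
Qed.

Lemma extension_mcp : Mcp (leXb le Hpo) leZ extension.
Proof.
  intros D s HD Hs.
  set (F := image (@proj1_sig _ (XbarP le Hpo)) D).
  assert (Hsups : forall A, F A -> exists z, is_sup leZ (image T (proj1_sig A)) z)
    by (intros A [a [_ ->]]; exists (extension a); apply extension_spec).
  assert (HF : directed (leY le) F).
  { apply (directed_image (le1 := leXb le Hpo)); [apply leY_porder | auto | exact HD]. }
  destruct (proj2 HZ _ (sup_images_directed F Hsups HF)) as [t Ht].
  assert (Es : proj1_sig s = Ysup le F)
    by (apply is_sup_Ysup, Xbar_proj_mcp; assumption).
  replace (extension s) with t.
  - apply is_sup_ext with (sup_images F); [| exact Ht].
    intros z; split.
    + intros [A [[a [Ha ->]] Hz]]; exists a; split; [exact Ha |].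
      apply (sup_unique (proj1 HZ) _ _ _ Hz (extension_spec a)).
    + intros [a [Ha ->]]; exists (proj1_sig a); split; [exists a; auto | apply extension_spec].
  - apply (sup_unique (proj1 HZ) (image T (proj1_sig (proj1_sig s))));
      [rewrite Es; apply sup_images_is_sup; assumption | apply extension_spec].
Qed.

End Extension.

Lemma Xbar_completion : directed_completion le (leXb le Hpo) (iotaXb le Hpo).
Proof.
  split; [apply Xbar_dcpo | split; [apply iotaXb_mcp |]].
  intros Z leZ HZ T HT; split.
  - exists (extension HZ T HT); split; [apply extension_mcp | apply extension_iota].
  - intros Tb1 Tb2 H1 E1 H2 E2 A.
    apply (mcp_eq_on_dclosure Tb1 Tb2 (fun B => exists x, proj1_sig B = iotaY le Hpo x)
             (proj1 HZ) H1 H2); [| apply Xbar_dense].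
    intros B [x Hx]; rewrite (sig_eq B (iotaXb le Hpo x) Hx), E1, E2; reflexivity.
Qed.

End Construction.

Section Completion.
Context {X Xb : Type} {le : X -> X -> Prop} {leb : Xb -> Xb -> Prop} {iota : X -> Xb}
  (HC : directed_completion le leb iota).

(* The closure of [iota(X)] is itself a dcpo receiving [iota]; the extension of
   [iota] into it, followed by the inclusion, extends [iota] and so is the identity. *)
Lemma completion_dense xb : dclosure leb (fun y => exists a, y = iota a) xb.
Proof.
  destruct HC as [HXb [Hi HU]].
  set (R := fun y => exists a, y = iota a); set (C := dclosure leb R).
  assert (Hsups : forall D, directed leb D -> (forall d, D d -> C d) ->
                    exists s, is_sup leb D s) by (intros D HD _; apply (proj2 HXb), HD).
  pose proof (sub_dcpo leb C (proj1 HXb) (dclosure_dsup_closed R) Hsups) as HCdcpo.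
  pose proof (proj1_sig_mcp leb C (proj1 HXb) (dclosure_dsup_closed R) Hsups) as Hproj.
  set (iotaC := fun x => exist C (iota x) (dclosure_incl R _ (ex_intro _ x eq_refl))).
  destruct (HU _ _ HCdcpo iotaC (mcp_corestrict leb C iotaC Hi)) as [[r [Hr Er]] _].
  assert (Er_id : proj1_sig (r xb) = xb).
  { apply (proj2 (HU _ _ HXb iota Hi) (fun y => proj1_sig (r y)) (fun y => y)).
    - exact (mcp_comp r _ (proj1 HXb) (proj1 HCdcpo) Hr Hproj).
    - intros x; rewrite Er; reflexivity.
    - apply mcp_id.
    - reflexivity. }
  rewrite <- Er_id; apply proj2_sig.
Qed.

Lemma completion_tip xb :
  tip_is leb (fun y => (exists a, y = iota a) /\ leb y xb) xb.
Proof.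
  pose proof (proj1 (proj1 HC)) as [Hrefl [Htr _]]; split.
  - apply (completion_dense xb
             (fun z => dclosure leb (fun y => (exists a, y = iota a) /\ leb y z) z)).
    + intros D HD HDcl s Hs; apply (dclosure_dsup_closed _ D HD); [| exact Hs].
      intros d Hd; apply (dclosure_mono (fun y => (exists a, y = iota a) /\ leb y d));
        [| apply HDcl, Hd].
      intros y [Hy Hyd]; split; [exact Hy | exact (Htr _ _ _ Hyd (proj1 Hs d Hd))].
    + intros z [a ->]; apply dclosure_incl; split; [exists a; reflexivity | apply Hrefl].
  - intros y Hy; apply (Hy (fun y => leb y xb)); [| intros z [_ Hz]; exact Hz].
    intros D _ HDxb s Hs; apply (proj2 Hs), HDxb.
Qed.

Lemma completion_extension_sup {Z : Type} {leZ : Z -> Z -> Prop} (T : X -> Z)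
  (Tb : Xb -> Z) : Mcp leb leZ Tb -> (forall x, Tb (iota x) = T x) ->
  forall xb, is_sup leZ (fun z => exists x, leb (iota x) xb /\ z = T x) (Tb xb).
Proof.
  intros HTb E xb; split.
  - intros a [x [Hx ->]]; rewrite <- E; apply (mcp_monotone Tb (proj1 (proj1 HC)) HTb), Hx.
  - intros u Hu; apply (proj1 (completion_tip xb) (fun y => leZ (Tb y) u)).
    + intros D HD HDu s Hs; apply (proj2 (HTb D s HD Hs)).
      intros a [d [Hd ->]]; apply HDu, Hd.
    + intros y [[a ->] Hay]; rewrite E; apply Hu; exists a; auto.
Qed.

End Completion.

Lemma completion_unique {X X1 X2 : Type} {le : X -> X -> Prop}
  {le1 : X1 -> X1 -> Prop} {i1 : X -> X1} {le2 : X2 -> X2 -> Prop} {i2 : X -> X2} :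
  directed_completion le le1 i1 -> directed_completion le le2 i2 ->
  (exists phi : X1 -> X2, order_iso le1 le2 phi /\ forall x, phi (i1 x) = i2 x) /\
  (forall phi psi : X1 -> X2,
     order_iso le1 le2 phi -> (forall x, phi (i1 x) = i2 x) ->
     order_iso le1 le2 psi -> (forall x, psi (i1 x) = i2 x) ->
     forall y, phi y = psi y).
Proof.
  intros [D1 [M1 U1]] [D2 [M2 U2]]; split.
  - destruct (U1 _ _ D2 i2 M2) as [[phi [Hphi Ephi]] _].
    destruct (U2 _ _ D1 i1 M1) as [[psi [Hpsi Epsi]] _].
    assert (E1 : forall a, psi (phi a) = a).
    { intros a; apply (proj2 (U1 _ _ D1 i1 M1) (fun y => psi (phi y)) (fun y => y));
        [exact (mcp_comp phi psi (proj1 D1) (proj1 D2) Hphi Hpsi)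
        | intros x; rewrite Ephi, Epsi; reflexivity | apply mcp_id | reflexivity]. }
    assert (E2 : forall b, phi (psi b) = b).
    { intros b; apply (proj2 (U2 _ _ D2 i2 M2) (fun y => phi (psi y)) (fun y => y));
        [exact (mcp_comp psi phi (proj1 D2) (proj1 D1) Hpsi Hphi)
        | intros x; rewrite Epsi, Ephi; reflexivity | apply mcp_id | reflexivity]. }
    exists phi; split; [split; [exists psi; auto |] | exact Ephi].
    intros a b; split; [apply (mcp_monotone phi (proj1 D1) Hphi) |].
    intros Hab; rewrite <- (E1 a), <- (E1 b); apply (mcp_monotone psi (proj1 D2) Hpsi), Hab.
  - intros phi psi Hphi Ephi Hpsi Epsi.
    exact (proj2 (U1 _ _ D2 i2 M2) phi psi (order_iso_mcp phi Hphi) Ephi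
             (order_iso_mcp psi Hpsi) Epsi).
Qed.

Section Realization.
Context {X : Type} (le : X -> X -> Prop) (Hpo : is_porder le).

Definition iota_image (A : Yset le) : Yset le -> Prop :=
  fun B => exists a, proj1_sig A a /\ B = iotaY le Hpo a.

Lemma dclosure_iota_image_le (A B : Yset le) :
  dclosure (leY le) (iota_image A) B -> leY le B A.
Proof.
  intros HB; apply (HB (fun B => leY le B A)).
  - intros D _ HDA s Hs; apply (proj2 Hs), HDA.
  - intros C [a [Ha ->]] x Hx; exact (Yset_lower le A a x Ha Hx).
Qed.

Lemma XbarP_tip (A : Yset le) : XbarP le Hpo A -> tip_is (leY le) (iota_image A) A.
Proof.
  intros HA; split; [| apply dclosure_iota_image_le].
  apply (HA (fun B => dclosure (leY le) (iota_image B) B)).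
  - intros D HD HDcl s Hs; apply (dclosure_dsup_closed _ D HD); [| exact Hs].
    intros d Hd; apply (dclosure_mono (iota_image d)); [| apply HDcl, Hd].
    intros B [a [Ha ->]]; exists a; split; [exact (proj1 Hs d Hd a Ha) | reflexivity].
  - intros B [x ->]; apply dclosure_incl; exists x; split; [apply Hpo | reflexivity].
Qed.

Lemma tip_iota_image_eq (A t : Yset le) : tip_is (leY le) (iota_image A) t -> t = A.
Proof.
  intros [Ht Hmax]; apply (leY_porder le); [exact (dclosure_iota_image_le A t Ht) |].
  intros a Ha; apply (Hmax (iotaY le Hpo a)); [apply dclosure_incl; exists a; auto | apply Hpo].
Qed.

Lemma has_tip_XbarP (A : Yset le) : has_tip (leY le) (iota_image A) -> XbarP le Hpo A.
Proof.
  intros [t Ht]; rewrite <- (tip_iota_image_eq A t Ht).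
  apply (dclosure_mono (iota_image A)); [intros B [a [_ ->]]; exists a; reflexivity |].
  apply Ht.
Qed.

End Realization.

Theorem mainTheorem1 (X : Type) (le : X -> X -> Prop) (Hpo : is_porder le) :
  (* existence *)
  (exists (Xb : Type) (leb : Xb -> Xb -> Prop) (iota : X -> Xb),
      directed_completion le leb iota) /\
  (* uniqueness up to unique isomorphism *)
  (forall (X1 : Type) (le1 : X1 -> X1 -> Prop) (i1 : X -> X1)
          (X2 : Type) (le2 : X2 -> X2 -> Prop) (i2 : X -> X2),
      directed_completion le le1 i1 -> directed_completion le le2 i2 ->
      (exists phi : X1 -> X2, order_iso le1 le2 phi /\ forall x, phi (i1 x) = i2 x) /\
      (forall phi psi : X1 -> X2,
          order_iso le1 le2 phi -> (forall x, phi (i1 x) = i2 x) ->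
          order_iso le1 le2 psi -> (forall x, psi (i1 x) = i2 x) ->
          forall y, phi y = psi y)) /\
  (* (i) and (ii) for every directed completion *)
  (forall (Xb : Type) (leb : Xb -> Xb -> Prop) (iota : X -> Xb),
      directed_completion le leb iota ->
      (forall xb : Xb,
          tip_is leb (fun y => (exists a, y = iota a) /\ leb y xb) xb) /\
      (forall (Z : Type) (leZ : Z -> Z -> Prop), is_dcpo leZ ->
       forall T : X -> Z, Mcp le leZ T ->
       forall Tb : Xb -> Z, Mcp leb leZ Tb -> (forall x, Tb (iota x) = T x) ->
       forall xb : Xb,
         is_sup leZ (fun z => exists x, leb (iota x) xb /\ z = T x) (Tb xb))) /\
  (* (iii) explicit realization *)
  (directed_completion le (leXb le Hpo) (iotaXb le Hpo) /\
   forall A : Yset le,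
     (XbarP le Hpo A <->
        has_tip (leY le) (fun B => exists a, proj1_sig A a /\ B = iotaY le Hpo a)) /\
     (has_tip (leY le) (fun B => exists a, proj1_sig A a /\ B = iotaY le Hpo a) ->
        tip_is (leY le) (fun B => exists a, proj1_sig A a /\ B = iotaY le Hpo a) A)).
Proof.
  pose proof (Xbar_completion le Hpo) as HXbar.
  split; [exists (XbarT le Hpo), (leXb le Hpo), (iotaXb le Hpo); exact HXbar |].
  split; [intros X1 le1 i1 X2 le2 i2; apply completion_unique |].
  split.
  - intros Xb leb iota HC; split; [apply (completion_tip HC) |].
    intros Z leZ _ T _ Tb HTb E; exact (completion_extension_sup HC T Tb HTb E).
  - split; [exact HXbar |]; intros A; split; [split |].
    + intros HA; exists A; exact (XbarP_tip le Hpo A HA).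
    + apply (has_tip_XbarP le Hpo A).
    + intros HA; exact (XbarP_tip le Hpo A (has_tip_XbarP le Hpo A HA)).
Qed.
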